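(* Let $G$ be an $A$-AW graph with a pendant vertex, and let $t\in T_{V(G)}^{A(G)}(1)$. Then $\overline{G}$ is $N$-AW if and only if $\gcd(1+t,\ell)=1$.
   Context: All graphs are finite and simple; $\overline{G}$ is the complement. Fix an integer $\ell\ge2$; labelings are maps $V(G)\to\mathbb{Z}_\ell$. In the neighborhood Lights Out game, toggling a vertex $w$ adds $1$ (mod $\ell$) to the label of each vertex of the closed neighborhood $N[w]$; in the adjacency Lights Out game, toggling $w$ adds $1$ to the label of each vertex of the open neighborhood $N(w)$. A game is won when all labels are $0$. A graph is $N$-AW (resp. $A$-AW) if every labeling is winnable in the neighborhood (resp. adjacency) game. For $U\subseteq V(G)$ and $r\in\mathbb{Z}_\ell$, $T_U^{A(G)}(r)\subseteq\mathbb{Z}_\ell$ is the set of all $t$ such that the adjacency game on $G$ starting from the labeling that is $r$ on $U$ and $0$ elsewhere can be won with the vertices of $U$ toggled a total of $t$ times (mod $\ell$). The gcd of an element of $\mathbb{Z}_\ell$ with $\ell$ is computed using any integer representative. *)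

From mathcomp Require Import all_boot all_order all_algebra.
Set Implicit Arguments. Unset Strict Implicit. Unset Printing Implicit Defensive.
Import GRing.Theory.
Local Open Scope ring_scope.

Definition simple_graph (V : finType) (e : rel V) : Prop :=
  symmetric e /\ irreflexive e.

Definition compl_graph (V : finType) (e : rel V) : rel V :=
  fun x y => (x != y) && ~~ e x y.

Definition pendant (V : finType) (e : rel V) (v : V) : Prop :=
  #|[set w | e v w]| = 1%N.

(* Neighborhood game: toggling w adds 1 to each vertex of N[w].
   Toggle vector x wins from labeling b iff for every v,
   b v + sum of x w over w with v in N[w] = 0. *)
Definition N_wins (l : nat) (V : finType) (e : rel V) (b x : V -> 'Z_l) : Prop :=
  forall v : V, b v + \sum_(w : V | (w == v) || e w v) x w = 0.

(* Adjacency game: toggling w adds 1 to each vertex of N(w). *)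
Definition A_wins (l : nat) (V : finType) (e : rel V) (b x : V -> 'Z_l) : Prop :=
  forall v : V, b v + \sum_(w : V | e w v) x w = 0.

Definition N_AW (l : nat) (V : finType) (e : rel V) : Prop :=
  forall b : V -> 'Z_l, exists x : V -> 'Z_l, N_wins e b x.

Definition A_AW (l : nat) (V : finType) (e : rel V) : Prop :=
  forall b : V -> 'Z_l, exists x : V -> 'Z_l, A_wins e b x.

(* T_U^{A(G)}(r): totals t (mod l) of toggles on U over winning toggle vectors
   for the adjacency game starting from the labeling r on U, 0 elsewhere. *)
Definition T_A (l : nat) (V : finType) (e : rel V) (U : {set V}) (r t : 'Z_l) : Prop :=
  exists x : V -> 'Z_l,
    A_wins e (fun v => if v \in U then r else 0) x /\ \sum_(u in U) x u = t.

From mathcomp Require Import all_boot all_order all_algebra.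
From mathcomp Require Import ring.
Set Implicit Arguments. Unset Strict Implicit. Unset Printing Implicit Defensive.
Local Open Scope ring_scope.
Import GRing.Theory.

(* Let [x] win the adjacency game from the all-ones labeling, so that
   [A x = -1] and [t = \sum x].  In the complement, the closed neighbourhood
   of [v] is everything except the open neighbourhood of [v] in [G], so [y]
   wins on the complement from [b] iff [A y = b + (\sum y) 1].
   If [1 + t] is a unit, solve [A z = b] in [G] and correct [z] by the
   multiple [s x] with [s (1 + t) = \sum z].  Conversely, if [y] wins from the
   indicator of [N(u)], pairing [A y] with [x] and using the symmetry of [A]
   gives [-\sum y = -1 + (\sum y) t], i.e. [(\sum y) (1 + t) = 1]. *)

Section ComplementGame.

Variables (R : comPzRingType) (V : finType) (e : rel V).

Lemma sum_compl_closed_nbhd (e_irr : irreflexive e) (y : V -> R) (v : V) :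
  \sum_(w | (w == v) || compl_graph e w v) y w
  = \sum_w y w - \sum_(w | e w v) y w.
Proof.
rewrite [in RHS](bigID (e^~ v)) /= addrAC subrr add0r.
apply: eq_bigl => w; rewrite /compl_graph.
by case: eqVneq => [->|]; rewrite ?e_irr.
Qed.

Lemma sum_mul_adjC (e_sym : symmetric e) (x y : V -> R) :
  \sum_v x v * \sum_(w | e w v) y w = \sum_w y w * \sum_(v | e v w) x v.
Proof.
under eq_bigr => v _ do rewrite big_distrr big_mkcond /=.
rewrite exchange_big /=; apply: eq_bigr => w _.
rewrite big_distrr [RHS]big_mkcond /=; apply: eq_bigr => v _.
by rewrite e_sym; case: (e w v); rewrite // mulrC.
Qed.

Hypotheses (e_sym : symmetric e) (e_irr : irreflexive e).
Variable x : V -> R.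
Hypothesis adj_x : forall v, \sum_(w | e w v) x w = -1.

Lemma compl_win_nbhd_sum_inv (u : V) (y : V -> R) :
  (forall v, (if e u v then 1 else 0)
             + \sum_(w | (w == v) || compl_graph e w v) y w = 0) ->
  (1 + \sum_w x w) * \sum_w y w = 1.
Proof.
move=> win_y; set s := \sum_w y w.
have adj_y v : \sum_(w | e w v) y w = (if e u v then 1 else 0) + s.
  by apply/eqP; rewrite eq_sym -subr_eq0 -addrA -sum_compl_closed_nbhd ?win_y.
have pair_nbhd : \sum_v x v * (if e u v then 1 else 0) = -1.
  rewrite -(adj_x u) [RHS]big_mkcond; apply: eq_bigr => v _.
  by rewrite (e_sym v u); case: (e u v); rewrite ?mulr1 ?mulr0.
have pair_adj_y : \sum_v x v * \sum_(w | e w v) y w = -1 + (\sum_w x w) * s.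
  under eq_bigr => v _ do rewrite adj_y mulrDr.
  by rewrite big_split /= pair_nbhd mulr_suml.
have pair_adj_x : \sum_w y w * \sum_(v | e v w) x v = - s.
  by under eq_bigr => w _ do rewrite adj_x mulrN1; rewrite sumrN.
have := sum_mul_adjC e_sym x y; rewrite pair_adj_y pair_adj_x => pairing.
have -> : (1 + \sum_w x w) * s = 1 + (-1 + (\sum_w x w) * s) + s by ring.
by rewrite pairing addrNK.
Qed.

Lemma compl_win_correction (b z : V -> R) (s : R) :
  (forall v, \sum_(w | e w v) z w = b v) ->
  s * (1 + \sum_w x w) = \sum_w z w ->
  forall v, b v + \sum_(w | (w == v) || compl_graph e w v) (z w - s * x w) = 0.
Proof.
move=> adj_z s_def v.
rewrite sum_compl_closed_nbhd // !sumrB -!mulr_sumr adj_z adj_x -s_def.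
ring.
Qed.

End ComplementGame.

Lemma unit_Zp_gcd (l : nat) (u : 'Z_l) :
  (1 < l)%N -> (u \is a GRing.unit) = (gcdn u l == 1%N).
Proof. by move=> l_gt1; rewrite -{1}(natr_Zp u) unitZpE // /coprime gcdnC. Qed.

Theorem corollary3p7 (l : nat) (hl : (1 < l)%N) (V : finType) (e : rel V)
  (hG : simple_graph e) (hA : A_AW l e)
  (hpend : exists v : V, pendant e v)
  (t : 'Z_l) (ht : T_A e [set: V] 1 t) :
  N_AW l (compl_graph e) <-> gcdn (nat_of_ord (1 + t)) l = 1%N.
Proof.
have [e_sym e_irr] := hG.
have [x [win_x sum_x]] := ht.
have adj_x v : \sum_(w | e w v) x w = -1.
  by move/eqP: (win_x v); rewrite in_setT addrC addr_eq0 => /eqP.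
have {}sum_x : \sum_w x w = t by rewrite -sum_x; apply: eq_bigl => w; rewrite in_setT.
rewrite (rwP eqP) -unit_Zp_gcd //; split.
-
  move=> N_AW_compl; have [u _] := hpend.
  have [y win_y] := N_AW_compl (fun v => if e u v then 1 else 0).
  apply/unitrPr; exists (\sum_w y w); rewrite -sum_x.
  exact: (compl_win_nbhd_sum_inv e_sym e_irr adj_x win_y).
- move=> t1_unit b; have [z win_z] := hA (fun v => - b v).
  exists (fun w => z w - ((\sum_w z w) / (1 + t)) * x w).
  move=> v; apply: (compl_win_correction e_irr adj_x).
    by move=> w; apply/eqP; rewrite -subr_eq0 addrC win_z.
  by rewrite sum_x divrK.
Qed.
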